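(* In the setting below, let $(x_f,y_f,\theta_f)$ be a goal pose that is reached by at least one $2\pi$-arc $LSL$ or $RSR$ path. Then the minimum travel time over all $4\pi$-arc $LSL$ and $RSR$ paths reaching this goal pose is less than or equal to the minimum travel time over all $2\pi$-arc $LSL$ and $RSR$ paths reaching it.
   Context: Setting: a vehicle moves in the plane at unit speed with minimum turning radius $r>0$, in a steady current $(w_x,w_y)$ with speed $v_w=\sqrt{w_x^2+w_y^2}\in(0,1)$. The start pose is $(0,0,0)$ and the goal pose is $(x_f,y_f,\theta_f)$ with $\theta_f\in[0,2\pi)$. An $LSL$ path has parameters $(\alpha,\beta,\gamma)$ with $\alpha,\gamma\ge0$ and $\beta\ge0$: a left arc of angle $\alpha$ of radius $r$, a straight segment of length $\beta$, and a left arc of angle $\gamma$, in the frame moving with the current. Its travel time is $T=r(\alpha+\gamma)+\beta$. It reaches the goal iff for some $k\in\mathbb{Z}$: $\alpha+\gamma=2k\pi+\theta_f$, $x_f-w_xT=r\sin\theta_f+\beta\cos\alpha$, and $y_f-w_yT=r(1-\cos\theta_f)+\beta\sin\alpha$. An $RSR$ path is the analogous path with right arcs, with $T=r(\alpha+\gamma)+\beta$. It reaches the goal iff for some $k\in\mathbb{Z}$: $-\alpha-\gamma=2k\pi+\theta_f$, $x_f-w_xT=-r\sin\theta_f+\beta\cos\alpha$, and $y_f-w_yT=-r(1-\cos\theta_f)-\beta\sin\alpha$. A path is a $2\pi$-arc path if $\alpha,\gamma\in[0,2\pi)$, and a $4\pi$-arc path if $\alpha,\gamma\in[0,4\pi)$.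 *)

From Stdlib Require Import Reals Lra ZArith.
Open Scope R_scope.

Inductive path_kind := LSL | RSR.

Definition travel_time (r alpha beta gamma : R) : R := r * (alpha + gamma) + beta.

(* The path of kind [kd] with parameters (alpha,beta,gamma), in the current
   (wx,wy) with turning radius r, reaches the goal pose (xf,yf,thf)
   (from start pose (0,0,0)). *)
Definition reaches (kd : path_kind) (r wx wy xf yf thf alpha beta gamma : R) : Prop :=
  let T := travel_time r alpha beta gamma in
  match kd with
  | LSL => exists k : Z,
      alpha + gamma = 2 * IZR k * PI + thf /\
      xf - wx * T = r * sin thf + beta * cos alpha /\
      yf - wy * T = r * (1 - cos thf) + beta * sin alpha
  | RSR => exists k : Z,
      - alpha - gamma = 2 * IZR k * PI + thf /\
      xf - wx * T = - r * sin thf + beta * cos alpha /\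
      yf - wy * T = - r * (1 - cos thf) - beta * sin alpha
  end.

(* An admissible path whose arc angles lie in [0, bound):
   bound = 2*PI gives 2pi-arc paths, bound = 4*PI gives 4pi-arc paths. *)
Definition arc_path_reaching (bound : R) (kd : path_kind)
    (r wx wy xf yf thf alpha beta gamma : R) : Prop :=
  0 <= alpha < bound /\ 0 <= gamma < bound /\ 0 <= beta /\
  reaches kd r wx wy xf yf thf alpha beta gamma.

Definition arc_times (bound r wx wy xf yf thf : R) (T : R) : Prop :=
  exists (kd : path_kind) (alpha beta gamma : R),
    arc_path_reaching bound kd r wx wy xf yf thf alpha beta gamma /\
    T = travel_time r alpha beta gamma.

Definition is_minimum (S : R -> Prop) (m : R) : Prop :=
  S m /\ forall t, S t -> m <= t.

(* For a fixed path kind and winding number k the arc sum alpha + gamma is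
   fixed, and then the straight length beta is a nonnegative root of
   |p - beta w| = beta for a fixed vector p; since |w| < 1 there is at most one
   such root.  So each pair (kind, k) yields at most one travel time.  Arc
   angles below 4 pi leave only finitely many winding numbers, hence both sets
   of travel times are finite and nonempty and have minima, and the minimum
   over the larger set of 4pi-arc paths is the smaller one. *)
From Stdlib Require Import Reals Lra List Classical ZArith Lia.
Open Scope R_scope.

Lemma intercept_time_unique (P Q wx wy b1 b2 : R) :
  wx ^ 2 + wy ^ 2 < 1 -> 0 <= b1 -> 0 <= b2 ->
  (P - wx * b1) ^ 2 + (Q - wy * b1) ^ 2 = b1 ^ 2 ->
  (P - wx * b2) ^ 2 + (Q - wy * b2) ^ 2 = b2 ^ 2 -> b1 = b2.
Proof.
  intros Hw Hb1 Hb2 E1 E2.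
  set (A := 1 - (wx ^ 2 + wy ^ 2)).
  set (dot := P * wx + Q * wy).
  assert (HA : 0 < A) by (unfold A; lra).
  assert (Hroot : forall b, (P - wx * b) ^ 2 + (Q - wy * b) ^ 2 = b ^ 2 ->
                            P ^ 2 + Q ^ 2 - 2 * dot * b - A * b ^ 2 = 0).
  { intros b Eb; rewrite <- (Rminus_diag_eq _ _ Eb); unfold dot, A; ring. }
  apply Hroot in E1, E2.
  destruct (Req_dec b1 b2) as [-> | Hne]; [reflexivity | exfalso].
  assert (Hsum : 2 * dot = - A * (b1 + b2)).
  { assert (Hdiff : (b2 - b1) * (2 * dot + A * (b1 + b2)) = 0) by lra.
    apply Rmult_integral in Hdiff as [H | H]; [exfalso; apply Hne; lra | lra]. }
  (* Vieta: the product of the roots is -(P^2 + Q^2) / A <= 0. *)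
  assert (Hprod : P ^ 2 + Q ^ 2 + A * (b1 * b2) = 0) by nra.
  assert (Hb12 : 0 <= A * (b1 * b2)) by (apply Rmult_le_pos; nra).
  assert (HP : P = 0) by nra.
  assert (HQ : Q = 0) by nra.
  assert (b1 = 0) by (subst dot; nra).
  assert (b2 = 0) by (subst dot; nra).
  lra.
Qed.

Lemma unique_values_finite {A B : Type} (Q : A -> B -> Prop) (l : list A) :
  (forall c t1 t2, Q c t1 -> Q c t2 -> t1 = t2) ->
  exists ts, forall c t, In c l -> Q c t -> In t ts.
Proof.
  intros HQ; induction l as [| c l [ts Hts]].
  - exists nil; intros c t [].
  - destruct (classic (exists t, Q c t)) as [[t0 Ht0] | Hnone].
    + exists (t0 :: ts); intros c' t [<- | Hin] Ht.
      * left; exact (HQ _ _ _ Ht0 Ht).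
      * right; exact (Hts _ _ Hin Ht).
    + exists ts; intros c' t [<- | Hin] Ht.
      * exfalso; eauto.
      * exact (Hts _ _ Hin Ht).
Qed.

Lemma finite_has_minimum (ts : list R) (P : R -> Prop) :
  (forall t, P t -> In t ts) -> (exists t, P t) -> exists m, is_minimum P m.
Proof.
  revert P; induction ts as [| a ts IH]; intros P Hfin [t0 Ht0].
  - destruct (Hfin t0 Ht0).
  - destruct (classic (exists t, P t /\ t <> a)) as [Hother | Honly].
    + destruct (IH (fun t => P t /\ t <> a)) as [m [[Pm _] Hm]]; [| exact Hother |].
      { intros t [Pt Hne]; destruct (Hfin t Pt) as [-> | Hin]; [easy | exact Hin]. }
      destruct (classic (P a)) as [Pa | nPa].
      * exists (Rmin a m); split.
        { unfold Rmin; destruct (Rle_dec a m); assumption. }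
        intros t Pt; destruct (Req_dec t a) as [-> | Hne].
        -- apply Rmin_l.
        -- eapply Rle_trans; [apply Rmin_r | apply Hm; split; assumption].
      * exists m; split; [exact Pm |].
        intros t Pt; apply Hm; split; [exact Pt |]; intros ->; contradiction.
    + assert (Heq : forall t, P t -> t = a).
      { intros t Pt; apply NNPP; intros Hne; apply Honly; eauto. }
      exists a; split.
      * rewrite <- (Heq t0 Ht0); exact Ht0.
      * intros t Pt; rewrite (Heq t Pt); apply Rle_refl.
Qed.

Definition turn_sign (kd : path_kind) : R :=
  match kd with LSL => 1 | RSR => -1 end.

Definition reaches_winding (kd : path_kind) (k : Z)
    (r wx wy xf yf thf alpha beta gamma : R) : Prop :=
  let s := turn_sign kd in
  let T := travel_time r alpha beta gamma in
  s * (alpha + gamma) = 2 * IZR k * PI + thf /\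
  xf - wx * T = s * r * sin thf + beta * cos alpha /\
  yf - wy * T = s * r * (1 - cos thf) + s * beta * sin alpha.

Lemma reaches_exists_winding kd r wx wy xf yf thf alpha beta gamma :
  reaches kd r wx wy xf yf thf alpha beta gamma ->
  exists k, reaches_winding kd k r wx wy xf yf thf alpha beta gamma.
Proof.
  unfold reaches_winding; destruct kd; simpl;
    intros [k (Hs & Hx & Hy)]; exists k; repeat split; lra.
Qed.

Lemma turn_sign_sqr kd : turn_sign kd ^ 2 = 1.
Proof. destruct kd; simpl; ring. Qed.

Lemma reaches_winding_time_unique kd k r wx wy xf yf thf a1 b1 g1 a2 b2 g2 :
  wx ^ 2 + wy ^ 2 < 1 -> 0 <= b1 -> 0 <= b2 ->
  reaches_winding kd k r wx wy xf yf thf a1 b1 g1 ->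
  reaches_winding kd k r wx wy xf yf thf a2 b2 g2 ->
  travel_time r a1 b1 g1 = travel_time r a2 b2 g2.
Proof.
  unfold reaches_winding, travel_time.
  set (s := turn_sign kd); intros Hw Hb1 Hb2 (S1 & X1 & Y1) (S2 & X2 & Y2).
  assert (Hs : s ^ 2 = 1) by apply turn_sign_sqr.
  assert (HS : a2 + g2 = a1 + g1).
  { assert (s * (s * (a2 + g2)) = s * (s * (a1 + g1))) by (rewrite S1, S2; reflexivity).
    nra. }
  rewrite HS in X2, Y2 |- *.
  assert (Hpolar : forall a b, (b * cos a) ^ 2 + (s * b * sin a) ^ 2 = b ^ 2).
  { intros a b; rewrite <- (Rmult_1_r (b ^ 2)), <- (sin2_cos2 a).
    unfold Rsqr; nra. }
  enough (b1 = b2) by (subst; reflexivity).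
  apply (intercept_time_unique (xf - wx * r * (a1 + g1) - s * r * sin thf)
           (yf - wy * r * (a1 + g1) - s * r * (1 - cos thf)) wx wy); auto.
  - rewrite <- (Hpolar a1 b1); f_equal; f_equal; lra.
  - rewrite <- (Hpolar a2 b2); f_equal; f_equal; lra.
Qed.

Lemma winding_range kd k alpha gamma thf :
  0 <= alpha < 4 * PI -> 0 <= gamma < 4 * PI -> 0 <= thf < 2 * PI ->
  turn_sign kd * (alpha + gamma) = 2 * IZR k * PI + thf ->
  (-4 <= k <= 3)%Z.
Proof.
  intros Ha Hg Hth Hk; assert (HPI := PI_RGT_0).
  assert (Hlo : -5 < IZR k) by (destruct kd; simpl in Hk; nra).
  assert (Hhi : IZR k < 4) by (destruct kd; simpl in Hk; nra).
  apply lt_IZR in Hlo, Hhi; lia.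
Qed.

Definition windings : list Z := map (fun n => Z.of_nat n - 4)%Z (seq 0 8).

Lemma in_windings k : (-4 <= k <= 3)%Z -> In k windings.
Proof.
  intros Hk; apply in_map_iff; exists (Z.to_nat (k + 4)); split.
  - lia.
  - apply in_seq; lia.
Qed.

Lemma arc_times_mono (b1 b2 r wx wy xf yf thf t : R) :
  b1 <= b2 -> arc_times b1 r wx wy xf yf thf t -> arc_times b2 r wx wy xf yf thf t.
Proof.
  intros Hb (kd & a & b & g & (Ha & Hg & Hb0 & Hr) & Ht).
  exists kd, a, b, g; repeat split; lra || assumption.
Qed.

Lemma arc_times_finite (r wx wy xf yf thf : R) :
  wx ^ 2 + wy ^ 2 < 1 -> 0 <= thf < 2 * PI ->
  exists ts, forall t, arc_times (4 * PI) r wx wy xf yf thf t -> In t ts.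
Proof.
  intros Hw Hth.
  set (winding_time (c : path_kind * Z) (t : R) := exists a b g, 0 <= b /\
         reaches_winding (fst c) (snd c) r wx wy xf yf thf a b g /\
         t = travel_time r a b g).
  destruct (unique_values_finite winding_time (list_prod (LSL :: RSR :: nil) windings))
    as [ts Hts].
  { intros c t1 t2 (a1 & b1 & g1 & Hb1 & R1 & ->) (a2 & b2 & g2 & Hb2 & R2 & ->).
    eapply reaches_winding_time_unique; eassumption. }
  exists ts; intros t (kd & a & b & g & (Ha & Hg & Hb & Hr) & Ht).
  destruct (reaches_exists_winding _ _ _ _ _ _ _ _ _ _ Hr) as [k Hk].
  apply (Hts (kd, k)).
  - apply in_prod; [destruct kd; simpl; auto |].
    apply in_windings, (winding_range kd k a g thf); auto; apply Hk.
  - exists a, b, g; auto.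
Qed.

Theorem theorem3 (r wx wy xf yf thf : R) :
  0 < r ->
  0 < sqrt (wx ^ 2 + wy ^ 2) < 1 ->
  0 <= thf < 2 * PI ->
  (exists (kd : path_kind) (alpha beta gamma : R),
      arc_path_reaching (2 * PI) kd r wx wy xf yf thf alpha beta gamma) ->
  exists T4 T2 : R,
    is_minimum (arc_times (4 * PI) r wx wy xf yf thf) T4 /\
    is_minimum (arc_times (2 * PI) r wx wy xf yf thf) T2 /\
    T4 <= T2.
Proof.
  intros _ Hs Hth [kd [a [b [g Hp]]]].
  assert (HPI := PI_RGT_0).
  assert (Hw : wx ^ 2 + wy ^ 2 < 1).
  { apply sqrt_lt_0_alt; rewrite sqrt_1; lra. }
  assert (Hsub : forall t, arc_times (2 * PI) r wx wy xf yf thf t ->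
                           arc_times (4 * PI) r wx wy xf yf thf t)
    by (intros t; apply arc_times_mono; lra).
  assert (Hne : exists t, arc_times (2 * PI) r wx wy xf yf thf t)
    by (exists (travel_time r a b g), kd, a, b, g; auto).
  destruct (arc_times_finite r wx wy xf yf thf Hw Hth) as [ts Hts].
  destruct (finite_has_minimum ts _ Hts) as [T4 H4].
  { destruct Hne as [t Ht]; eauto. }
  destruct (finite_has_minimum ts (arc_times (2 * PI) r wx wy xf yf thf)) as [T2 H2];
    [auto | exact Hne |].
  exists T4, T2; split; [exact H4 | split; [exact H2 |]].
  apply (proj2 H4), Hsub, (proj1 H2).
Qed.
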